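(* Let $q$ be a prime power and $G=\mathrm{PGL}_3(q)$ acting on the points of $\mathrm{PG}_2(q)$. The maximal size of an independent set of the derangement graph $\Gamma_G$ is $q^3(q^2-1)(q-1)$.
   Context: A derangement is an element fixing no point of $\mathrm{PG}_2(q)$. The derangement graph $\Gamma_G$ has vertex set $G$, with $g,h$ adjacent iff $gh^{-1}$ is a derangement. *)

From HB Require Import structures.
From mathcomp Require Import all_boot all_order all_algebra all_fingroup.
Set Implicit Arguments. Unset Strict Implicit. Unset Printing Implicit Defensive.
Import GRing.Theory.
Local Open Scope ring_scope.

Section PG2.
Variable F : finFieldType.

Definition vset := {set 'rV[F]_3}.

Definition span1 (v : 'rV[F]_3) : vset := [set c *: v | c in [set: F]].

Definition PG2_points : {set vset} :=
  [set span1 v | v in [set v : 'rV[F]_3 | v != 0]].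

Definition mx_act (g : 'M[F]_3) (P : vset) : vset := [set w *m g | w in P].

(* PGL_3(F) as a permutation group on points: the permutations induced by
   invertible 3x3 matrices on the points of PG_2(F) (acting trivially on the
   other elements of the ambient type vset, which are not points). *)
Definition PGL3 : {set {perm vset}} :=
  [set s : {perm vset} | [exists g : 'M[F]_3, (g \in unitmx) &&
      [forall P : vset, s P == (if P \in PG2_points then mx_act g P else P)]]].

Definition derangement (s : {perm vset}) : bool :=
  [forall P in PG2_points, s P != P].

Definition derangement_adj (g h : {perm vset}) : bool :=
  derangement (g * h^-1)%g.

Definition independent (S : {set {perm vset}}) : bool :=
  (S \subset PGL3) && [forall g in S, forall h in S, ~~ derangement_adj g h].

End PG2.

(* The proof is the clique-coclique bound.  In any group G, an independent set
   S and a clique C of a Cayley graph satisfy |S| |C| <= |G|, because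
   (s, c) |-> c^-1 s is injective on S x C.  A clique of size |PG_2(q)| comes
   from a Singer-type subgroup: if C is a 3x3 matrix whose characteristic
   polynomial is an irreducible cubic, then F[C] is a field with q^3 elements,
   so every nonzero combination g - c h of its elements is invertible and
   g h^-1 fixes no point.  Conversely the stabilizer of a point is independent
   and, by orbit-stabilizer, has at least |G| / |PG_2(q)| elements. *)

From mathcomp Require Import all_boot all_order all_algebra all_fingroup.
From mathcomp Require Import ring.
Set Implicit Arguments. Unset Strict Implicit. Unset Printing Implicit Defensive.
Import GRing.Theory.
Local Open Scope ring_scope.

Section FieldMatrix.
Variable F : finFieldType.

(* Some monic cubic over F has no root: otherwise every monic cubic factors as
   (X - a)(X^2 + b X + c), i.e. the factoring map below would be onto F^3, hence
   injective, yet X(X^2 - X) = (X - 1)X^2. *)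
Lemma exists_rootless_cubic_coefs :
  exists s t u : F, forall a : F, a ^+ 3 + s * a ^+ 2 + t * a + u != 0.
Proof.
have [/existsP[[[s t] u] /forallP no_root]|] := boolP [exists x : F * F * F,
    [forall a : F, a ^+ 3 + x.1.1 * a ^+ 2 + x.1.2 * a + x.2 != 0]].
  by exists s, t, u.
rewrite negb_exists => /forallP all_roots.
pose factored (x : F * F * F) : F * F * F :=
  (x.1.2 - x.1.1, x.2 - x.1.1 * x.1.2, - (x.1.1 * x.2)).
have onto : [set: F * F * F] \subset factored @: setT.
  apply/subsetP => [[[s t] u]] _.
  have := all_roots (s, t, u); rewrite negb_forall => /existsP[a /negPn/eqP /= root_a].
  apply/imsetP; exists (a, s + a, t + a * s + a ^+ 2) => //=.
  congr (_, _, _) => /=; [ring | ring |].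
  by rewrite -[u]subr0 -root_a; ring.
have /imset_injP factored_inj : #|factored @: setT| == #|[set: F * F * F]|.
  by rewrite eqn_leq (subset_leq_card onto) subset_leq_card ?subsetT.
have := factored_inj (0, -1, 0) (1, 0, 0) (in_setT _) (in_setT _).
have -> : factored (0, -1, 0) = factored (1, 0, 0) by congr (_, _, _) => /=; ring.
by move=> /(_ erefl) [] /eqP; rewrite eq_sym oner_eq0.
Qed.

Lemma exists_rootless_cubic :
  exists p : {poly F}, [/\ p \is monic, size p = 4 & forall a, ~~ root p a].
Proof.
have [s [t [u no_root]]] := exists_rootless_cubic_coefs.
have coefs : Poly [:: u; t; s; 1] = [:: u; t; s; 1] :> seq F.
  by rewrite (@PolyK _ 0) ?oner_eq0.
exists (Poly [:: u; t; s; 1]); split; first by rewrite monicE lead_coefE coefs.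
  by rewrite coefs.
move=> a; rewrite /root horner_Poly /=; apply: contra (no_root a) => /eqP <-.
by apply/eqP; ring.
Qed.

Lemma char_poly_onto n (p : {poly F}) :
  p \is monic -> size p = n.+1 -> exists C : 'M[F]_n, char_poly C = p.
Proof.
move=> monic_p size_p; move: (companionmx p) (companionmxK monic_p).
by rewrite size_p => C char_C; exists C.
Qed.

(* Cayley-Hamilton plus Bezout: a polynomial coprime to the characteristic
   polynomial of A evaluates to an invertible matrix at A. *)
Lemma horner_mx_unit n (A : 'M[F]_n.+1) (r : {poly F}) :
  coprimep r (char_poly A) -> horner_mx A r \in unitmx.
Proof.
move=> /Bezout_eq1_coprimepP[[u v] /= bezout].
have := congr1 (horner_mx A) bezout.
rewrite rmorphD !rmorphM /= Cayley_Hamilton mulr0 addr0 rmorph1.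
by move=> /mulmx1_unit[].
Qed.

(* The element of F[C] with coordinates w, i.e. w_0 + w_1 C + w_2 C^2. *)
Definition field_mx (C : 'M[F]_3) (w : 'rV[F]_3) : 'M[F]_3 := horner_mx C (rVpoly w).

Lemma field_mxZ (C : 'M[F]_3) c (v : 'rV[F]_3) :
  field_mx C (c *: v) = c *: field_mx C v.
Proof. by rewrite /field_mx !linearZ. Qed.

Lemma field_mxB (C : 'M[F]_3) c (v w : 'rV[F]_3) :
  field_mx C (v - c *: w) = field_mx C v - c *: field_mx C w.
Proof. by rewrite /field_mx !linearB !linearZ. Qed.

(* Taking for C a matrix whose characteristic polynomial p is an irreducible
   cubic, F[C] = {field_mx C w} is a field of order q^3: a nonzero polynomial
   of degree < 3 is coprime to p, so its value at C is a unit. *)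
Lemma exists_field_mx :
  exists C : 'M[F]_3, forall w : 'rV[F]_3, w != 0 -> field_mx C w \in unitmx.
Proof.
have [p [monic_p size_p no_root]] := exists_rootless_cubic.
have irr_p : irreducible_poly p by apply: cubic_irreducible => //; rewrite size_p.
have [C char_C] := char_poly_onto monic_p size_p.
exists C => w w_neq0; apply: horner_mx_unit.
rewrite char_C coprimep_sym irreducible_poly_coprime //.
have r_neq0 : rVpoly w != 0.
  by apply: contra w_neq0 => /eqP r0; rewrite -[w]rVpolyK r0 linear0.
by apply/negP => /(dvdp_leq r_neq0); rewrite size_p leqNgt ltnS size_poly.
Qed.

End FieldMatrix.

Section ScalarClasses.
Variables (F : finFieldType) (m n : nat) (U : finType).

Lemma card_scalar_classes (A : {set 'M[F]_(m, n)}) (f : 'M[F]_(m, n) -> U) :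
    0 \notin A ->
    {in A, forall a c, c != 0 -> c *: a \in A /\ f (c *: a) = f a} ->
    {in A &, forall a b, f a = f b -> exists c, b = c *: a} ->
  (#|f @: A| * (#|F| - 1))%N = #|A|.
Proof.
move=> A_neq0 scaleA fibre.
rewrite -[#|A|]sum1_card (partition_big_imset f) /= -sum_nat_const.
apply: eq_bigr => _ /imsetP[a aA ->]; rewrite sum1dep_card.
have a_neq0 : a != 0 by apply: contraNneq A_neq0 => <-.
have scale_inj : injective (fun c : F => c *: a).
  move=> c d /eqP; rewrite -subr_eq0 -scalerBl scalemx_eq0 (negPf a_neq0) orbF.
  by rewrite subr_eq0 => /eqP.
rewrite subn1 -(cardsC1 0) -(card_imset [set~ 0] scale_inj); apply: eq_card => b.
rewrite !inE; apply/imsetP/andP => [[c]|[bA /eqP fb]].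
  by rewrite !inE => /(scaleA a aA)[cA fc] ->; rewrite fc.
have [c def_b] := fibre a b aA bA (esym fb).
exists c => //; rewrite !inE; apply: contraNneq A_neq0 => c0.
by rewrite -(_ : b = 0) // def_b c0 scale0r.
Qed.

End ScalarClasses.

Lemma card_nonzero_rV (F : finFieldType) :
  #|[set v : 'rV[F]_3 | v != 0]| = (#|F| ^ 3 - 1)%N.
Proof.
have -> : [set v : 'rV[F]_3 | v != 0] = [set~ 0] by apply/setP => v; rewrite !inE.
by rewrite cardsC1 card_mx mul1n subn1.
Qed.

Section Lines.
Variable F : finFieldType.
Implicit Types (u v w : 'rV[F]_3) (g h : 'M[F]_3) (P : vset F).
Notation pts := (PG2_points F).

Lemma span1P v w : reflect (exists c, w = c *: v) (w \in span1 v).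
Proof.
apply: (iffP imsetP) => [[c _ ->]|[c ->]]; first by exists c.
by exists c; rewrite ?inE.
Qed.

Lemma span1_mem v : v \in span1 v.
Proof. by apply/span1P; exists 1; rewrite scale1r. Qed.

Lemma span1_scale c v : c != 0 -> span1 (c *: v) = span1 v.
Proof.
move=> c_neq0; apply/setP => w; apply/span1P/span1P => [[d ->]|[d ->]].
  by exists (d * c); rewrite scalerA.
by exists (d / c); rewrite scalerA divfK.
Qed.

Lemma span1_eq v w : span1 v = span1 w -> exists c, w = c *: v.
Proof. by move=> vw; apply/span1P; rewrite vw span1_mem. Qed.

Lemma ptsP P : reflect (exists2 v, v != 0 & P = span1 v) (P \in pts).
Proof.
apply: (iffP imsetP) => [[v]|[v v_neq0 ->]]; first by rewrite inE => ? ->; exists v.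
by exists v; rewrite ?inE.
Qed.

Lemma mx_act_span g v : mx_act g (span1 v) = span1 (v *m g).
Proof.
apply/setP => w; apply/imsetP/span1P => [[u /span1P[c ->] ->]|[c ->]].
  by exists c; rewrite scalemxAl.
by exists (c *: v); [apply/span1P; exists c | rewrite scalemxAl].
Qed.

Lemma mx_act_comp g h P : mx_act (g *m h) P = mx_act h (mx_act g P).
Proof.
apply/setP => w; apply/imsetP/imsetP => [[u uP ->]|[x /imsetP[u uP ->] ->]].
  by exists (u *m g); [apply/imsetP; exists u | rewrite mulmxA].
by exists u; rewrite // mulmxA.
Qed.

Lemma mx_act1 P : mx_act 1%:M P = P.
Proof.
apply/setP => w; apply/imsetP/idP => [[u uP ->]|wP]; first by rewrite mulmx1.
by exists w; rewrite ?mulmx1.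
Qed.

Lemma mulmx_unit_eq0 g v : g \in unitmx -> (v *m g == 0) = (v == 0).
Proof.
move=> g_unit; apply/eqP/eqP => [vg0|->]; last exact: mul0mx.
by rewrite -[v]mulmx1 -(mulmxV g_unit) mulmxA vg0 mul0mx.
Qed.

Lemma mx_actK g : g \in unitmx -> cancel (mx_act g) (mx_act (invmx g)).
Proof. by move=> g_unit P; rewrite -mx_act_comp mulmxV // mx_act1. Qed.

Lemma mx_act_pts g P : g \in unitmx -> P \in pts -> mx_act g P \in pts.
Proof.
move=> g_unit /ptsP[v v_neq0 ->]; apply/ptsP; exists (v *m g).
  by rewrite mulmx_unit_eq0.
exact: mx_act_span.
Qed.

Lemma card_pts : (#|pts| * (#|F| - 1))%N = (#|F| ^ 3 - 1)%N.
Proof.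
rewrite -card_nonzero_rV; apply: card_scalar_classes => [|v|v w _ _ /span1_eq //].
- by rewrite inE eqxx.
- rewrite inE => v_neq0 c c_neq0.
  by rewrite inE scaler_eq0 negb_or c_neq0 span1_scale.
Qed.

End Lines.

Section ProjectiveAction.
Variable F : finFieldType.
Implicit Types (v : 'rV[F]_3) (g h : 'M[F]_3) (P : vset F).
Notation pts := (PG2_points F).

(* The action of g on PG_2(F), extended by the identity off the points and
   trivial for singular g, so that it always defines a permutation. *)
Definition pact g P := if (g \in unitmx) && (P \in pts) then mx_act g P else P.

Lemma pact_inj g : injective (pact g).
Proof.
move=> P Q; rewrite /pact; case: (boolP (g \in unitmx)) => //= g_unit.
have [P_pt|P_npt] := boolP (P \in pts); have [Q_pt|Q_npt] := boolP (Q \in pts) => //=.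
- by move/(can_inj (mx_actK g_unit)).
- by move=> gPQ; rewrite -gPQ mx_act_pts in Q_npt.
- by move=> PgQ; rewrite PgQ mx_act_pts in P_npt.
Qed.

Definition pm g : {perm vset F} := perm (@pact_inj g).

Lemma pmE g P : pm g P = pact g P.
Proof. by rewrite permE. Qed.

Lemma pm_PGL g : g \in unitmx -> pm g \in PGL3 F.
Proof.
move=> g_unit; rewrite inE; apply/existsP; exists g; rewrite g_unit /=.
by apply/forallP => P; rewrite pmE /pact g_unit.
Qed.

Lemma PGL3P s : reflect (exists2 g, g \in unitmx & s = pm g) (s \in PGL3 F).
Proof.
apply: (iffP idP) => [|[g g_unit ->]]; last exact: pm_PGL.
rewrite inE => /existsP[g /andP[g_unit /forallP sE]]; exists g => //.
by apply/permP => P; rewrite pmE /pact g_unit (eqP (sE P)).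
Qed.

Lemma pmM g h : g \in unitmx -> h \in unitmx -> pm (g *m h) = (pm g * pm h)%g.
Proof.
move=> g_unit h_unit; apply/permP => P.
rewrite permM !pmE /pact unitmx_mul g_unit h_unit /=.
case: (boolP (P \in pts)) => [P_pt|P_npt] /=; last by rewrite (negPf P_npt).
by rewrite (mx_act_pts g_unit P_pt) mx_act_comp.
Qed.

Lemma pm1 : pm 1%:M = 1%g.
Proof. by apply/permP => P; rewrite perm1 pmE /pact; case: ifP; rewrite ?mx_act1. Qed.

Lemma pmV g : g \in unitmx -> ((pm g)^-1)%g = pm (invmx g).
Proof.
move=> g_unit; apply/eqP; rewrite eq_invg_mul -pmM ?unitmx_inv //.
by rewrite mulmxV // pm1.
Qed.

Lemma group_PGL3 : group_set (PGL3 F).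
Proof.
apply/group_setP; split; first by rewrite -pm1 pm_PGL ?unitmx1.
move=> _ _ /PGL3P[g g_unit ->] /PGL3P[h h_unit ->].
by rewrite -pmM // pm_PGL // unitmx_mul g_unit.
Qed.

Canonical PGL3_group := Group group_PGL3.

Lemma pm_scale c g : c != 0 -> pm (c *: g) = pm g.
Proof.
move=> c_neq0; apply/permP => P; rewrite !pmE /pact unitmxZ ?unitfE //.
have [g_unit|//] := boolP (g \in unitmx).
have [/ptsP[v v_neq0 ->]|//] := boolP (P \in pts).
by rewrite !mx_act_span -scalemxAr span1_scale.
Qed.

Lemma eigenvectors_scalar g :
  (forall v, v != 0 -> exists c, v *m g = c *: v) -> exists c, g = c%:M.
Proof.
move=> eigen.
have off_diag i j : i != j -> g i j = 0.
  move=> ij; have delta_neq0 : delta_mx 0 i != 0 :> 'rV[F]_3.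
    by apply/eqP => /matrixP /(_ 0 i) /eqP; rewrite !mxE !eqxx oner_eq0.
  have [c gi] := eigen _ delta_neq0.
  have := congr1 (fun M : 'rV[F]_3 => M 0 j) gi; rewrite -rowE !mxE /= => ->.
  by rewrite eq_sym (negPf ij) mulr0.
have ones_neq0 : const_mx 1 != 0 :> 'rV[F]_3.
  by apply/eqP => /matrixP /(_ 0 0) /eqP; rewrite !mxE oner_eq0.
have [c g1] := eigen _ ones_neq0; exists c; apply/matrixP => i j; rewrite !mxE.
have := congr1 (fun M : 'rV[F]_3 => M 0 j) g1; rewrite !mxE mulr1.
rewrite (bigD1 j) //= big1 => [|k kj]; last by rewrite mxE mul1r off_diag.
rewrite mxE mul1r addr0 => gjj.
by have [->|ij] := eqVneq i j; rewrite ?gjj ?mulr1n // off_diag ?mulr0n.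
Qed.

Lemma pm_eq_scale g h : g \in unitmx -> h \in unitmx ->
  pm g = pm h -> exists c, h = c *: g.
Proof.
move=> g_unit h_unit gh; pose k := h *m invmx g.
have k_unit : k \in unitmx by rewrite unitmx_mul h_unit unitmx_inv.
have [c kc] : exists c, k = c%:M.
  apply: eigenvectors_scalar => v v_neq0.
  have : pm k (span1 v) = span1 v by rewrite pmM ?unitmx_inv // -pmV // gh mulgV perm1.
  rewrite pmE /pact k_unit (_ : span1 v \in pts) /=; last by apply/ptsP; exists v.
  by rewrite mx_act_span => vk; apply/span1_eq; rewrite vk.
by exists c; rewrite -mul_scalar_mx -kc mulmxKV.
Qed.

Lemma card_PGL3 :
  (#|PGL3 F| * (#|F| - 1) =
   #|F| ^ 3 * ((#|F| - 1) * (#|F| ^ 2 - 1) * (#|F| ^ 3 - 1)))%N.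
Proof.
have card_GL3 : #|[set g : 'M[F]_3 | g \in unitmx]| =
    (#|F| ^ 3 * ((#|F| - 1) * (#|F| ^ 2 - 1) * (#|F| ^ 3 - 1)))%N.
  have := @card_GL F 3 isT; rewrite cardsT card_sub => card_GL3.
  transitivity #|[pred g : 'M[F]_3 | g \is a GRing.unit]|.
    by apply: eq_card => g; rewrite !inE.
  by rewrite card_GL3 big_ltn // big_ltn // big_nat1 expn1 [X in (_ * X)%N = _]mulnA.
have PGL3E : PGL3 F = pm @: [set g | g \in unitmx].
  apply/setP => s; apply/PGL3P/imsetP => [[g g_unit ->]|[g]]; first by exists g; rewrite ?inE.
  by rewrite inE => g_unit ->; exists g.
rewrite -card_GL3 PGL3E; apply: card_scalar_classes => [|g|g h].
- by rewrite inE unitmxE det0 unitr0.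
- by rewrite inE => g_unit c c_neq0; rewrite inE unitmxZ ?unitfE // pm_scale.
- by rewrite !inE => g_unit h_unit /pm_eq_scale; apply.
Qed.

End ProjectiveAction.

Section CliqueCoclique.
Variables (gT : finGroupType) (G : {group gT}) (D : pred gT).

(* Clique-coclique bound: if the quotients of distinct elements of C all
   satisfy D while no quotient of elements of S does, then S * C embeds
   in G through (s, c) |-> c^-1 s. *)
Lemma clique_coclique_bound (S C : {set gT}) :
    S \subset G -> C \subset G ->
    {in S &, forall s t, ~~ D (s * t^-1)%g} ->
    {in C &, forall c d, c != d -> D (c * d^-1)%g} ->
  (#|S| * #|C| <= #|G|)%N.
Proof.
move=> sSG sCG coclique clique; pose f (x : gT * gT) := (x.2^-1 * x.1)%g.
have f_inj : {in setX S C &, injective f}.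
  move=> [s1 c1] [s2 c2] /setXP[s1S c1C] /setXP[s2S c2C]; rewrite /f /= => f12.
  have quot : (s1 * s2^-1 = c1 * c2^-1)%g.
    by rewrite -[s1](mulKVg c1) f12 mulgA mulgK.
  have [c12|c12] := eqVneq c1 c2; last first.
    by have := coclique _ _ s1S s2S; rewrite quot clique.
  by move: f12; rewrite c12 => /mulgI ->.
rewrite -cardsX -(card_in_imset f_inj); apply/subset_leq_card/subsetP.
move=> _ /imsetP[[s c] /setXP[sS cC] ->].
have [sG cG] := (subsetP sSG s sS, subsetP sCG c cC).
by rewrite /f /= groupM ?groupV.
Qed.

End CliqueCoclique.

Section DerangementGraph.
Variable F : finFieldType.
Implicit Types (v w : 'rV[F]_3) (g h : 'M[F]_3).
Notation pts := (PG2_points F).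

(* g h^-1 fixes the point <v> iff v g = c v h for some c, i.e. v lies in the
   kernel of g - c h; so if the whole pencil g - c h is invertible, then
   g h^-1 is a derangement. *)
Lemma derangement_pencil g h : g \in unitmx -> h \in unitmx ->
  (forall c, g - c *: h \in unitmx) -> derangement (pm g * (pm h)^-1)%g.
Proof.
move=> g_unit h_unit pencil; rewrite pmV // -pmM ?unitmx_inv //.
apply/forallP => P; apply/implyP => P_pt; have /ptsP[v v_neq0 defP] := P_pt.
rewrite pmE /pact unitmx_mul g_unit unitmx_inv h_unit P_pt defP /= mx_act_span.
apply/eqP => /esym/span1_eq[c vgh].
have vg : v *m g = c *: (v *m h).
  by rewrite -(mulmxKV h_unit (v *m g)) -[v *m g *m _]mulmxA vgh scalemxAl.
have : v *m (g - c *: h) = 0 by rewrite mulmxBr -scalemxAr vg subrr.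
by move/eqP; rewrite mulmx_unit_eq0 // (negPf v_neq0).
Qed.

Lemma stabilizer_independent P : P \in pts -> independent ('C_(PGL3_group F)[P | 'P])%g.
Proof.
move=> P_pt; apply/andP; split; first exact: subsetIl.
apply/forallP => s; apply/implyP => sP; apply/forallP => t; apply/implyP => tP.
have := groupM sP (groupVr tP); rewrite inE => /andP[_ /astab1P].
rewrite /= apermE /derangement_adj => fixP.
by apply/negP => /forallP /(_ P); rewrite P_pt fixP eqxx.
Qed.

(* Orbit-stabilizer: a point stabilizer has at least |G| / |PG_2(q)| elements. *)
Lemma card_stabilizer P : P \in pts ->
  (#|PGL3 F| <= #|pts| * #|('C_(PGL3_group F)[P | 'P])%g|)%N.
Proof.
move=> P_pt; rewrite -(card_orbit_stab 'P%act (PGL3_group F) P) leq_mul2r.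
apply/orP; right; apply/subset_leq_card/subsetP => _ /orbitP[s /PGL3P[g g_unit ->] <-].
by rewrite /= apermE pmE /pact g_unit P_pt /= mx_act_pts.
Qed.

Variable C : 'M[F]_3.
Hypothesis field_C : forall w, w != 0 -> field_mx C w \in unitmx.

(* The collineations induced by the nonzero elements of the field F[C]
   form a clique of the derangement graph. *)
Definition field_clique : {set {perm vset F}} :=
  [set pm (field_mx C w) | w in [set w : 'rV[F]_3 | w != 0]].

Lemma field_clique_sub : field_clique \subset PGL3 F.
Proof.
by apply/subsetP => s /imsetP[w]; rewrite inE => /field_C w_unit ->; apply: pm_PGL.
Qed.

Lemma field_clique_eq v w : v != 0 -> w != 0 ->
  pm (field_mx C v) = pm (field_mx C w) -> exists c, w = c *: v.
Proof.
move=> v_neq0 w_neq0 /(pm_eq_scale (field_C v_neq0) (field_C w_neq0))[c vw].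
have singular : field_mx C (w - c *: v) \notin unitmx.
  by rewrite field_mxB vw subrr unitmxE det0 unitr0.
by exists c; apply/eqP; rewrite -subr_eq0; apply: contraNT singular; apply: field_C.
Qed.

Lemma field_clique_derangements :
  {in field_clique &, forall s t, s != t -> derangement (s * t^-1)%g}.
Proof.
move=> _ _ /imsetP[v + ->] /imsetP[w + ->]; rewrite !inE => v_neq0 w_neq0 vw.
apply: derangement_pencil; rewrite ?field_C // => c.
rewrite -field_mxB field_C // subr_eq0; apply: contraNneq vw => v_cw.
move: v_neq0; rewrite v_cw scaler_eq0 negb_or => /andP[c_neq0 _].
by rewrite field_mxZ pm_scale.
Qed.

Lemma card_field_clique : (#|field_clique| * (#|F| - 1))%N = (#|F| ^ 3 - 1)%N.
Proof.
rewrite -card_nonzero_rV; apply: card_scalar_classes => [|v|v w].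
- by rewrite inE eqxx.
- rewrite inE => v_neq0 c c_neq0.
  by rewrite inE scaler_eq0 negb_or c_neq0 field_mxZ pm_scale.
- by rewrite !inE => v_neq0 w_neq0 /field_clique_eq; apply.
Qed.

End DerangementGraph.

Section Counting.
Variable F : finFieldType.
Notation pts := (PG2_points F).

Lemma card_sub1_gt0 : (0 < #|F| - 1)%N.
Proof. by rewrite subn_gt0 card_finNzRing_gt1. Qed.

Lemma card_PGL3_pts :
  #|PGL3 F| = (#|F| ^ 3 * (#|F| ^ 2 - 1) * (#|F| - 1) * #|pts|)%N.
Proof.
apply/eqP; rewrite -(eqn_pmul2r card_sub1_gt0) card_PGL3 -[(_ * #|pts| * _)%N]mulnA card_pts.
by apply/eqP; ring.
Qed.

Lemma card_pts_gt0 : (0 < #|pts|)%N.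
Proof.
rewrite lt0n; apply/eqP => no_pts; have := card_pts F.
rewrite no_pts mul0n => /esym/eqP; rewrite subn_eq0 leqNgt.
by rewrite -[X in (X < _)%N](exp1n 3) ltn_exp2r // card_finNzRing_gt1.
Qed.

Lemma independent_card_bound (S : {set {perm vset F}}) :
  independent S -> (#|S| * #|pts| <= #|PGL3 F|)%N.
Proof.
case/andP => sSG /forallP coclique; have [C field_C] := exists_field_mx F.
have clique_pts : #|field_clique C| = #|pts|.
  by apply/eqP; rewrite -(eqn_pmul2r card_sub1_gt0) card_pts card_field_clique.
rewrite -clique_pts (clique_coclique_bound (G := PGL3_group F) (D := @derangement F)) //.
- exact: field_clique_sub.
- by move=> s t sS tS; have := coclique s; rewrite sS => /forallP /(_ t); rewrite tS.
- exact: field_clique_derangements.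
Qed.

End Counting.

Theorem mainTheorem6 (F : finFieldType) (q : nat) (hq : #|F| = q) :
  (exists S : {set {perm vset F}},
      independent S /\ #|S| = (q ^ 3 * (q ^ 2 - 1) * (q - 1))%N) /\
  (forall S : {set {perm vset F}},
      independent S -> #|S| <= q ^ 3 * (q ^ 2 - 1) * (q - 1))%N.
Proof.
subst q; have upper (S : {set {perm vset F}}) :
    independent S -> (#|S| <= #|F| ^ 3 * (#|F| ^ 2 - 1) * (#|F| - 1))%N.
  by move/independent_card_bound; rewrite card_PGL3_pts leq_pmul2r ?card_pts_gt0.
split=> //; have /card_gt0P[P P_pt] := card_pts_gt0 F.
exists ('C_(PGL3_group F)[P | 'P])%g; split; first exact: stabilizer_independent.
apply/eqP; rewrite eqn_leq upper ?stabilizer_independent //=.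
by have := card_stabilizer P_pt; rewrite card_PGL3_pts mulnC leq_pmul2l ?card_pts_gt0.
Qed.
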